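(* Let $k\ge 2$ be an integer, $a=6k+1$, $b=2a-6$, $c=2a-2$, $S=\{a,b,c\}$, $G=\langle S\rangle$. Define, for $i\in[0,k-2]$, $A_{i,k}=\{(2i+1)a,\ (2i+2)a-6(i+1),\ (2i+2)a-6(i+1)+4\}\cup[(2i+2)a-6i,\,(2i+2)a-2]_2$, $B_{i,k}=\{(2i+2)a,\ (2i+3)a-6(i+1),\ (2i+3)a-6(i+1)+4\}\cup[(2i+3)a-6i,\,(2i+3)a-2]_2$; further $A_{k-1,k}=\{(2k-1)a,\ 2ka-6k,\ 2ka-6k+4\}\cup[2ka-6k+6,\,2ka-2]_2$, $B_{k-1,k}=\{2ka,\ (2k+1)a-6k,\ (2k+1)a-6k+4\}\cup[(2k+1)a-6k+6,\,(2k+1)a-8]_2\cup[(2k+1)a-6,(2k+1)a-4]\cup[(2k+1)a-2,(2k+1)a]$, $D_{k,k}=[(2k+1)a+1,\,(2k+1)a+1+6k-8]_2\cup[(2k+2)a-6,(2k+2)a-4]\cup[(2k+2)a-2,(2k+2)a]$; and for $i\in[k+1,2k-1]$, $C_{i,k}=[2ia+1,\,2ia+1+2(6k-3i-4)]_2\cup[2ia+1+2(6k-3i-3),\,2ia+3+2(6k-3i-3)]\cup[2ia+5+2(6k-3i-3),\,(2i+1)a]$, $D_{i,k}=[(2i+1)a+1,\,(2i+1)a+1+2(6k-3i-4)]_2\cup[(2i+1)a+1+2(6k-3i-3),\,(2i+1)a+3+2(6k-3i-3)]\cup[(2i+1)a+5+2(6k-3i-3),\,(2i+2)a]$. Let $H_{5,k}=\{0\}\cup\bigcup_{i=0}^{k-1}(A_{i,k}\cup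 B_{i,k})\cup D_{k,k}\cup\bigcup_{i=k+1}^{2k-1}(C_{i,k}\cup D_{i,k})\cup[(4k-1)a+5,\infty[$. Then: (1) $C_{2k-1,k}=[(4k-2)a+1,(4k-2)a+3]\cup[(4k-2)a+5,(4k-1)a]$ and $D_{2k-1,k}=[(4k-1)a+1,(4k-1)a+3]\cup[(4k-1)a+5,4ka]$; (2) $x\in G$ if and only if $x=(p+2q)a+4r-6q$ for some $p,q,r\in\mathbb{N}$ with $0\le r\le q$; (3) $H_{5,k}\subseteq G$; (4) $G\subseteq H_{5,k}$; (5) $A_{i,k}<B_{i,k}$ for $i\in[0,k-1]$; $B_{i,k}<A_{i+1,k}$ for $i\in[0,k-2]$; $B_{k-1,k}<D_{k,k}$; $C_{i,k}<D_{i,k}$ for $i\in[k+1,2k-1]$; $D_{i,k}<C_{i+1,k}$ for $i\in[k+1,2k-2]$; (6) $H_{5,k}$ is a $3$-permutation numerical semigroup.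
   Context: $\mathbb{N}=\{0,1,2,\dots\}$. A numerical semigroup is a submonoid $G$ of $(\mathbb{N},+,0)$ with $\mathbb{N}\setminus G$ finite; $\langle S\rangle$ is the submonoid generated by $S$. Writing the elements of a numerical semigroup as $0=g_0<g_1<g_2<\cdots$, it is an $n$-permutation numerical semigroup if it is generated by $\{g_1,\dots,g_n\}$ and for every $k\in\mathbb{N}$ the tuple $(g_{kn+1}\bmod n,\dots,g_{kn+n}\bmod n)$ contains exactly one representative of each residue class mod $n$. Notation: $[u,v]=\{x\in\mathbb{N}:u\le x\le v\}$ and $[u,v]_2=\{x\in[u,v]:x\equiv u\pmod 2\}$ (both empty if $u>v$); $[u,\infty[=\{x\in\mathbb{N}:x\ge u\}$. For nonempty $X,Y\subseteq\mathbb{N}$, $X<Y$ means $x<y$ for all $x\in X,y\in Y$. *)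

(* subsets of N are predicates nat -> Prop; interval endpoints
   are computed in Z so that no truncated subtraction occurs. *)
From Stdlib Require Import ZArith Lia.
Open Scope Z_scope.

Definition nset := nat -> Prop.

Definition Icc (u v : Z) : nset := fun x => u <= Z.of_nat x <= v.
Definition Icc2 (u v : Z) : nset :=
  fun x => u <= Z.of_nat x <= v /\ Z.of_nat x mod 2 = u mod 2.
Definition Ici (u : Z) : nset := fun x => u <= Z.of_nat x.
Definition set1 (p : Z) : nset := fun x => Z.of_nat x = p.
Definition set3 (p q r : Z) : nset :=
  fun x => Z.of_nat x = p \/ Z.of_nat x = q \/ Z.of_nat x = r.
Definition setU (X Y : nset) : nset := fun x => X x \/ Y x.
Definition set_eq (X Y : nset) : Prop := forall x, X x <-> Y x.
Definition set_sub (X Y : nset) : Prop := forall x, X x -> Y x.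
Definition set_lt (X Y : nset) : Prop :=
  (exists x, X x) /\ (exists y, Y y) /\ forall x y, X x -> Y y -> (x < y)%nat.

Inductive gen (S : nset) : nset :=
| gen0 : gen S 0%nat
| gen_in x : S x -> gen S x
| gen_add x y : gen S x -> gen S y -> gen S (x + y)%nat.

Definition submonoid (G : nset) : Prop :=
  G 0%nat /\ forall x y, G x -> G y -> G (x + y)%nat.

Definition numerical_semigroup (G : nset) : Prop :=
  submonoid G /\ exists l : list nat, forall x, ~ G x -> List.In x l.

Definition perm_num_semigroup (n : nat) (G : nset) : Prop :=
  numerical_semigroup G /\
  exists g : nat -> nat,
    (forall j, (g j < g (S j))%nat) /\
    (forall x, G x <-> exists j, g j = x) /\
    (forall x, G x <-> gen (fun y => exists i, (1 <= i <= n)%nat /\ g i = y) x) /\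
    (forall m r, (r < n)%nat ->
       exists! i, (1 <= i <= n)%nat /\ Nat.modulo (g (m * n + i)%nat) n = r).

Section Sets.
Variable k : Z.
Definition a := 6 * k + 1.
Definition b := 2 * a - 6.
Definition c := 2 * a - 2.
Definition S3 : nset := set3 a b c.
Definition G : nset := gen S3.

Definition Agen (i : Z) : nset :=
  setU (set3 ((2*i+1)*a) ((2*i+2)*a - 6*(i+1)) ((2*i+2)*a - 6*(i+1) + 4))
       (Icc2 ((2*i+2)*a - 6*i) ((2*i+2)*a - 2)).
Definition Bgen (i : Z) : nset :=
  setU (set3 ((2*i+2)*a) ((2*i+3)*a - 6*(i+1)) ((2*i+3)*a - 6*(i+1) + 4))
       (Icc2 ((2*i+3)*a - 6*i) ((2*i+3)*a - 2)).
Definition Alast : nset :=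
  setU (set3 ((2*k-1)*a) (2*k*a - 6*k) (2*k*a - 6*k + 4))
       (Icc2 (2*k*a - 6*k + 6) (2*k*a - 2)).
Definition Blast : nset :=
  setU (set3 (2*k*a) ((2*k+1)*a - 6*k) ((2*k+1)*a - 6*k + 4))
  (setU (Icc2 ((2*k+1)*a - 6*k + 6) ((2*k+1)*a - 8))
  (setU (Icc ((2*k+1)*a - 6) ((2*k+1)*a - 4))
        (Icc ((2*k+1)*a - 2) ((2*k+1)*a)))).
Definition A (i : Z) : nset := if i =? k - 1 then Alast else Agen i.
Definition B (i : Z) : nset := if i =? k - 1 then Blast else Bgen i.
Definition Dkk : nset :=
  setU (Icc2 ((2*k+1)*a + 1) ((2*k+1)*a + 1 + 6*k - 8))
  (setU (Icc ((2*k+2)*a - 6) ((2*k+2)*a - 4))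
        (Icc ((2*k+2)*a - 2) ((2*k+2)*a))).
Definition C (i : Z) : nset :=
  setU (Icc2 (2*i*a + 1) (2*i*a + 1 + 2*(6*k - 3*i - 4)))
  (setU (Icc (2*i*a + 1 + 2*(6*k - 3*i - 3)) (2*i*a + 3 + 2*(6*k - 3*i - 3)))
        (Icc (2*i*a + 5 + 2*(6*k - 3*i - 3)) ((2*i+1)*a))).
Definition D (i : Z) : nset :=
  setU (Icc2 ((2*i+1)*a + 1) ((2*i+1)*a + 1 + 2*(6*k - 3*i - 4)))
  (setU (Icc ((2*i+1)*a + 1 + 2*(6*k - 3*i - 3)) ((2*i+1)*a + 3 + 2*(6*k - 3*i - 3)))
        (Icc ((2*i+1)*a + 5 + 2*(6*k - 3*i - 3)) ((2*i+2)*a))).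

Definition H5 : nset := fun x =>
  x = 0%nat \/
  (exists i, 0 <= i <= k - 1 /\ (A i x \/ B i x)) \/
  Dkk x \/
  (exists i, k + 1 <= i <= 2*k - 1 /\ (C i x \/ D i x)) \/
  Ici ((4*k-1)*a + 5) x.
End Sets.

(* Writing an element of G as p a + q' b + r c with q = q' + r, it equals L a - 2e
   with level L = p + 2q and e = 3q - 2r; the attainable e for L = 2Q + s are
   [0, 3Q] minus 3Q - 1. As a = 6k + 1 exceeds 6Q for Q <= k, the levels up to
   2k + 1 occupy disjoint windows ](L-1)a, La] and make up the blocks A and B;
   above, each window holds pieces of two consecutive levels (the blocks C, D),
   and everything from (4k-1)a + 5 on is reached. Since a = 1 mod 3, walking
   through G three elements at a time, each triple is either the top (L-1)a
   of a level with the two lowest elements of level L, or three successive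
   elements of one parity, or three of a run of consecutive integers; in all
   cases the residues are distinct. *)

From Stdlib Require Import ZArith Lia Classical ClassicalEpsilon Wf_nat List.
Open Scope Z_scope.

Lemma gen_nmul (S : nset) n y : S y -> gen S (n * y)%nat.
Proof.
  intro Sy. induction n as [|n IH]; simpl; [apply gen0 | apply gen_add; [apply gen_in|]; auto].
Qed.

Lemma gen_sub (S1 S2 : nset) x : set_sub S1 S2 -> gen S1 x -> gen S2 x.
Proof.
  intros H12 Hx. induction Hx; [apply gen0 | apply gen_in, H12 | apply gen_add]; auto.
Qed.

Lemma Icc2_iff u v x :
  Icc2 u v x <-> exists t, 0 <= t /\ Z.of_nat x = u + 2*t /\ u + 2*t <= v.
Proof.
  unfold Icc2; split.
  - intros [Hx Hm]. exists ((Z.of_nat x - u) / 2). Z.to_euclidean_division_equations; lia.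
  - intros (t & Ht & E & Hv). split; [lia|]. rewrite E. Z.to_euclidean_division_equations; lia.
Qed.

Lemma set_lt_sep (X Y : nset) (m : Z) x0 y0 : X x0 -> Y y0 ->
  (forall x, X x -> Z.of_nat x <= m) -> (forall y, Y y -> m < Z.of_nat y) -> set_lt X Y.
Proof.
  intros Hx0 Hy0 HX HY. split; [eauto | split; [eauto|]].
  intros x y Hx Hy. specialize (HX x Hx). specialize (HY y Hy). lia.
Qed.

Definition distinct_mod3 (x y z : nat) : Prop :=
  (x mod 3 <> y mod 3 /\ y mod 3 <> z mod 3 /\ x mod 3 <> z mod 3)%nat.

Lemma distinct_mod3_unique (f : nat -> nat) : distinct_mod3 (f 1%nat) (f 2%nat) (f 3%nat) ->
  forall r, (r < 3)%nat -> exists! i, (1 <= i <= 3)%nat /\ (f i mod 3 = r)%nat.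
Proof.
  intros (D12 & D23 & D13) r Hr.
  pose proof (Nat.mod_upper_bound (f 1%nat) 3). pose proof (Nat.mod_upper_bound (f 2%nat) 3).
  pose proof (Nat.mod_upper_bound (f 3%nat) 3).
  assert (r = f 1%nat mod 3 \/ r = f 2%nat mod 3 \/ r = f 3%nat mod 3)%nat as [E | [E | E]] by lia;
    [exists 1%nat | exists 2%nat | exists 3%nat]; (split; [split; [lia | auto] |]);
    intros i [Hi Hfi]; assert (i = 1 \/ i = 2 \/ i = 3)%nat as [-> | [-> | ->]] by lia; lia.
Qed.

Section Enumeration.

Variable P : nat -> Prop.

Definition succ_in (x y : nat) : Prop :=
  (x < y)%nat /\ P y /\ forall z, (x < z < y)%nat -> ~ P z.

Lemma succ_in_unique x y y' : succ_in x y -> succ_in x y' -> y = y'.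
Proof.
  intros (Hy & Py & Hgap) (Hy' & Py' & Hgap').
  destruct (Nat.lt_total y y') as [Hlt | [Heq | Hlt]]; auto.
  - exfalso. exact (Hgap' y ltac:(lia) Py).
  - exfalso. exact (Hgap y' ltac:(lia) Py').
Qed.

Hypothesis P_unbounded : forall x, exists y, (x < y)%nat /\ P y.

Lemma succ_in_exists x : exists y, succ_in x y.
Proof.
  destruct (dec_inh_nat_subset_has_unique_least_element (fun y => (x < y)%nat /\ P y)
              (fun y => classic _) (P_unbounded x)) as (y & ((Hxy & Py) & Hmin) & _).
  exists y. repeat split; auto.
  intros z Hz Pz. specialize (Hmin z (conj (proj1 Hz) Pz)). lia.
Qed.

Definition next (x : nat) : nat :=
  proj1_sig (constructive_indefinite_description _ (succ_in_exists x)).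

Lemma next_spec x : succ_in x (next x).
Proof. exact (proj2_sig (constructive_indefinite_description _ (succ_in_exists x))). Qed.

Fixpoint enum (j : nat) : nat :=
  match j with O => O | S j => next (enum j) end.

Lemma enum_succ j : succ_in (enum j) (enum (S j)).
Proof. exact (next_spec (enum j)). Qed.

Lemma enum_S j y : succ_in (enum j) y -> enum (S j) = y.
Proof. exact (succ_in_unique _ _ _ (enum_succ j)). Qed.

Lemma enum_lt j : (enum j < enum (S j))%nat.
Proof. exact (proj1 (enum_succ j)). Qed.

Lemma enum_in j : P 0%nat -> P (enum j).
Proof. intro P0. destruct j; [exact P0 | exact (proj1 (proj2 (enum_succ j)))]. Qed.

Lemma enum_bracket x : exists j, (enum j <= x < enum (S j))%nat.
Proof.
  induction x as [|x [j Hj]].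
  - exists O. pose proof (enum_lt O). simpl in *. lia.
  - destruct (Nat.eq_dec (S x) (enum (S j))) as [E | NE].
    + exists (S j). pose proof (enum_lt (S j)). lia.
    + exists j. lia.
Qed.

Lemma enum_onto x : P x -> exists j, enum j = x.
Proof.
  intro Px. destruct (enum_bracket x) as [j Hj]. exists j.
  destruct (Nat.eq_dec (enum j) x) as [E | NE]; auto.
  exfalso. destruct (enum_succ j) as (_ & _ & Hgap). exact (Hgap x ltac:(lia) Px).
Qed.

Lemma enum_triples (T : nat -> Prop) :
  T (enum 1) ->
  (forall x, T x -> exists u v w,
     succ_in x u /\ succ_in u v /\ succ_in v w /\ distinct_mod3 x u v /\ T w) ->
  forall m, distinct_mod3 (enum (m*3+1)) (enum (m*3+2)) (enum (m*3+3)).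
Proof.
  intros T1 Tstep.
  assert (Tm : forall m, T (enum (m*3+1))).
  { induction m as [|m IH]; [exact T1|].
    destruct (Tstep _ IH) as (u & v & w & Hu & Hv & Hw & _ & Tw).
    rewrite <- (enum_S _ _ Hu) in Hv. rewrite <- (enum_S _ _ Hv) in Hw.
    replace (S m * 3 + 1)%nat with (S (S (S (m*3+1)))) by lia.
    rewrite (enum_S _ _ Hw). exact Tw. }
  intro m. destruct (Tstep _ (Tm m)) as (u & v & w & Hu & Hv & _ & D & _).
  rewrite <- (enum_S _ _ Hu) in Hv, D. rewrite <- (enum_S _ _ Hv) in D.
  replace (m*3+2)%nat with (S (m*3+1)) by lia.
  replace (m*3+3)%nat with (S (S (m*3+1))) by lia. exact D.
Qed.

End Enumeration.

Definition Zsucc (P : Z -> Prop) (X Y : Z) : Prop :=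
  X < Y /\ P Y /\ forall z, X < z < Y -> ~ P z.

Definition triple (P : Z -> Prop) (X U V W : Z) : Prop :=
  Zsucc P X U /\ Zsucc P U V /\ Zsucc P V W /\
  (U - X) mod 3 <> 0 /\ (V - U) mod 3 <> 0 /\ (V - X) mod 3 <> 0.

Lemma triple_of_evens (P : Z -> Prop) X :
  P (X+2) -> P (X+4) -> P (X+6) -> ~ P (X+1) -> ~ P (X+3) -> ~ P (X+5) ->
  triple P X (X+2) (X+4) (X+6).
Proof.
  intros P2 P4 P6 N1 N3 N5.
  repeat split; auto; try lia; try (Z.to_euclidean_division_equations; lia);
    intros z Hz; [replace z with (X+1) | replace z with (X+3) | replace z with (X+5)]; auto; lia.
Qed.

Lemma triple_of_run (P : Z -> Prop) X :
  P (X+1) -> P (X+2) -> P (X+3) -> triple P X (X+1) (X+2) (X+3).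
Proof. intros. repeat split; auto; try lia; Z.to_euclidean_division_equations; lia. Qed.

Lemma triple_of_run_skip (P : Z -> Prop) X :
  P (X+1) -> P (X+2) -> ~ P (X+3) -> P (X+4) -> triple P X (X+1) (X+2) (X+4).
Proof.
  intros P1 P2 N3 P4.
  repeat split; auto; try lia; try (Z.to_euclidean_division_equations; lia).
  intros z Hz. replace z with (X+3) by lia. exact N3.
Qed.

Lemma Zsucc_succ_in (P : Z -> Prop) X Y : 0 <= X -> Zsucc P X Y ->
  succ_in (fun x => P (Z.of_nat x)) (Z.to_nat X) (Z.to_nat Y).
Proof.
  intros HX (HXY & PY & Hgap). repeat split.
  - lia.
  - rewrite Z2Nat.id by lia. exact PY.
  - intros z Hz. apply Hgap. lia.
Qed.

Lemma mod3_to_nat X U : 0 <= X -> 0 <= U -> (U - X) mod 3 <> 0 ->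
  (Z.to_nat X mod 3 <> Z.to_nat U mod 3)%nat.
Proof.
  intros HX HU Hne E. apply Hne. apply (f_equal Z.of_nat) in E.
  rewrite !Nat2Z.inj_mod, !Z2Nat.id in E by lia. Z.to_euclidean_division_equations; lia.
Qed.

Lemma enum_distinct_mod3 (P T : Z -> Prop)
    (P_unbounded : forall x, exists y, (x < y)%nat /\ P (Z.of_nat y)) :
  let g := enum _ P_unbounded in
  T (Z.of_nat (g 1%nat)) ->
  (forall X, 0 <= X -> T X -> exists U V W, triple P X U V W /\ T W) ->
  forall m, distinct_mod3 (g (m*3+1)%nat) (g (m*3+2)%nat) (g (m*3+3)%nat).
Proof.
  intros g T1 Tstep.
  apply (enum_triples _ _ (fun x => T (Z.of_nat x))); [exact T1|].
  intros x Tx.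
  destruct (Tstep _ (Nat2Z.is_nonneg x) Tx) as (U & V & W & (HU & HV & HW & R1 & R2 & R3) & TW).
  assert (0 <= U /\ U < V /\ V < W) by (destruct HU, HV, HW; lia).
  exists (Z.to_nat U), (Z.to_nat V), (Z.to_nat W).
  rewrite <- (Nat2Z.id x).
  refine (conj (Zsucc_succ_in _ _ _ _ HU) (conj (Zsucc_succ_in _ _ _ _ HV)
            (conj (Zsucc_succ_in _ _ _ _ HW) (conj _ _)))); try lia.
  - repeat split; apply mod3_to_nat; lia.
  - rewrite Z2Nat.id by lia. exact TW.
Qed.

Section Semigroup.

Variable k : Z.
Hypothesis hk : 2 <= k.
Let ha : a k = 6*k+1 := eq_refl.

Definition pqr_form (x : nat) : Prop :=
  exists p q r : nat, (r <= q)%nat /\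
    Z.of_nat x = (Z.of_nat p + 2 * Z.of_nat q) * a k + 4 * Z.of_nat r - 6 * Z.of_nat q.

Lemma G_pqr x : G k x <-> pqr_form x.
Proof.
  unfold G, pqr_form. split.
  - induction 1 as [| x Sx | x y _ (p1 & q1 & r1 & H1 & E1) _ (p2 & q2 & r2 & H2 & E2)].
    + exists 0%nat, 0%nat, 0%nat. lia.
    + unfold S3, set3, b, c in Sx.
      destruct Sx as [E | [E | E]]; [exists 1%nat, 0%nat, 0%nat | exists 0%nat, 1%nat, 0%nat
        | exists 0%nat, 1%nat, 1%nat]; lia.
    + exists (p1+p2)%nat, (q1+q2)%nat, (r1+r2)%nat. lia.
  - intros (p & q & r & Hrq & E).
    assert (Ex : x = (p * Z.to_nat (a k) + (q - r) * Z.to_nat (b k) + r * Z.to_nat (c k))%nat).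
    { apply Nat2Z.inj. rewrite !Nat2Z.inj_add, !Nat2Z.inj_mul, Nat2Z.inj_sub by lia.
      unfold b, c. rewrite !Z2Nat.id by lia. lia. }
    rewrite Ex. unfold b, c.
    repeat apply gen_add; apply gen_nmul; unfold S3, set3, b, c; rewrite Z2Nat.id; lia.
Qed.

Definition Gz (X : Z) : Prop :=
  exists Q s e, 0 <= Q /\ 0 <= s <= 1 /\ 0 <= e <= 3*Q /\ e <> 3*Q - 1 /\
    X = (2*Q+s) * a k - 2*e.

Lemma pqr_Gz x : pqr_form x <-> Gz (Z.of_nat x).
Proof.
  split.
  - intros (p & q & r & Hrq & E).
    destruct (Nat.Even_or_Odd p) as [[p' Hp] | [p' Hp]]; subst p;
      [exists (Z.of_nat p' + Z.of_nat q), 0 | exists (Z.of_nat p' + Z.of_nat q), 1];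
      exists (3 * Z.of_nat q - 2 * Z.of_nat r); lia.
  - intros (Q & s & e & HQ & Hs & He & Hne & E).
    pose proof (Z.div_mod e 3 ltac:(lia)). pose proof (Z.mod_pos_bound e 3 ltac:(lia)).
    assert (0 <= e / 3) by (apply Z.div_pos; lia).
    set (m := e / 3) in *.
    assert (e mod 3 = 0 \/ e mod 3 = 1 \/ e mod 3 = 2) as [Ht | [Ht | Ht]] by lia;
      [exists (Z.to_nat (2*Q+s-2*m)), (Z.to_nat m), 0%nat
      | exists (Z.to_nat (2*Q+s-2*m-2)), (Z.to_nat (m+1)), 1%nat
      | exists (Z.to_nat (2*Q+s-2*m-4)), (Z.to_nat (m+2)), 2%nat];
      (split; [lia|]); rewrite !Z2Nat.id by lia; lia.
Qed.

Lemma G_Gz x : G k x <-> Gz (Z.of_nat x).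
Proof. rewrite G_pqr. apply pqr_Gz. Qed.

Lemma Gz_window j X : 0 <= j <= 4*k-1 -> j * a k < X <= (j+1) * a k -> Gz X ->
  exists Q s e, 0 <= s <= 1 /\ 0 <= e <= 3*Q /\ e <> 3*Q - 1 /\
    (2*Q+s = j+1 /\ X = (j+1) * a k - 2*e \/ 2*Q+s = j+2 /\ X = (j+2) * a k - 2*e).
Proof.
  intros Hj HX (Q & s & e & HQ & Hs & He & Hne & E).
  destruct (Z_le_gt_dec (2*Q+s) j).
  { assert (0 <= (j - (2*Q+s)) * a k) by (apply Z.mul_nonneg_nonneg; lia). lia. }
  destruct (Z_le_gt_dec (2*Q+s) (j+2)).
  { exists Q, s, e. assert (2*Q+s = j+1 \/ 2*Q+s = j+2) as [HL | HL] by lia;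
      rewrite <- HL; lia. }
  destruct (Z.eq_dec (2*Q+s) (j+3)) as [HL | HL].
  - exists (Q-1), s, (e - a k). assert (j = 2*Q+s-3) by lia. subst j. lia.
  - assert (0 <= (2*Q+s-j-4) * (a k - 3)) by (apply Z.mul_nonneg_nonneg; lia). lia.
Qed.

Lemma Gz_tail X : (4*k-1) * a k + 5 <= X -> Gz X.
Proof.
  intro HX.
  assert (exists j r, X = j * a k + r /\ 0 <= r < a k) as (j & r & E & Hr).
  { exists (X / a k), (X mod a k). split; [rewrite Z.mul_comm; apply Z.div_mod | apply Z.mod_pos_bound]; lia. }
  assert (j = 4*k-1 \/ 4*k <= j) as [-> | Hj] by nia.
  - destruct (Z.Even_or_Odd r) as [[u ->] | [u ->]];
      [exists (2*k), 1, (a k - u) | exists (2*k), 0, (3*k - u)]; lia.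
  - destruct (Z.Even_or_Odd j) as [[J ->] | [J ->]];
      destruct (Z.Even_or_Odd r) as [[u ->] | [u ->]];
      [exists (J+1), 0, (a k - u) | exists J, 1, (3*k - u)
      | exists (J+1), 1, (a k - u) | exists (J+1), 0, (3*k - u)]; lia.
Qed.

Lemma Gz_window_odd i s t X : k <= i <= 2*k-1 -> 0 <= s <= 1 -> (i = k -> s = 1) ->
  0 <= t -> 1 + 2*t <= 12*k - 6*i - 7 -> X = (2*i+s) * a k + 1 + 2*t -> Gz X.
Proof. intros. exists (i+s), (1-s), (3*k-t). lia. Qed.

Lemma Gz_window_high i s X : k <= i <= 2*k-1 -> 0 <= s <= 1 ->
  12*k - 6*i - 5 <= X - (2*i+s) * a k <= a k -> X - (2*i+s) * a k <> 12*k - 6*i - 2 -> Gz X.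
Proof.
  intros. destruct (Z.Even_or_Odd (X - (2*i+s) * a k)) as [[u E] | [u E]].
  - exists (i+1), s, (a k - u). lia.
  - exists (i+s), (1-s), (3*k - u). lia.
Qed.

Definition nontop (Q s X : Z) : Prop :=
  exists e, 1 <= e <= 3*Q /\ e <> 3*Q - 1 /\ X = (2*Q+s) * a k - 2*e.

Lemma block_iff Q s T T' u v l h x : 1 <= Q -> 0 <= s <= 1 -> T = T' ->
  u = (2*Q+s) * a k - 6*Q -> v = u + 4 -> l = u + 6 -> h = (2*Q+s) * a k - 2 ->
  (setU (set3 T u v) (Icc2 l h) x <-> Z.of_nat x = T' \/ nontop Q s (Z.of_nat x)).
Proof.
  intros HQ Hs -> -> -> -> ->. unfold setU, set3, nontop. rewrite Icc2_iff. split.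
  - intros [[E | [E | E]] | (t & Ht & E & Hle)]; [left; lia | right.. ].
    + exists (3*Q). lia.
    + exists (3*Q-2). lia.
    + exists (3*Q-3-t). lia.
  - intros [E | (e & He & Hne & E)]; [left; left; lia|].
    destruct (Z_le_gt_dec e (3*Q-3)); [right; exists (3*Q-3-e) | left]; lia.
Qed.

Lemma A_iff i x : 0 <= i <= k-1 ->
  (A k i x <-> Z.of_nat x = (2*i+1) * a k \/ nontop (i+1) 0 (Z.of_nat x)).
Proof.
  intro Hi. unfold A. destruct (Z.eqb_spec i (k-1)) as [-> | _];
    [unfold Alast | unfold Agen]; apply block_iff; lia.
Qed.

Lemma B_iff i x : 0 <= i <= k-1 ->
  (B k i x <-> Z.of_nat x = (2*i+2) * a k \/ nontop (i+1) 1 (Z.of_nat x) \/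
    i = k-1 /\ (Z.of_nat x = (2*k+1) * a k \/ Z.of_nat x = (2*k+1) * a k - 1 \/
                Z.of_nat x = (2*k+1) * a k - 5)).
Proof.
  intro Hi. unfold B. destruct (Z.eqb_spec i (k-1)) as [-> | Hne].
  - unfold Blast, setU, set3, Icc, nontop. rewrite Icc2_iff. split.
    + intros [[E | [E | E]] | [(t & Ht & E & Hle) | [I | I]]].
      * left. lia.
      * right; left. exists (3*k). lia.
      * right; left. exists (3*k-2). lia.
      * right; left. exists (3*k-3-t). lia.
      * destruct (Z.eq_dec (Z.of_nat x) ((2*k+1) * a k - 5)); [right; right; lia|].
        right; left. assert (Z.of_nat x = (2*k+1) * a k - 6 \/ Z.of_nat x = (2*k+1) * a k - 4)
          as [E | E] by lia; [exists 3 | exists 2]; lia.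
      * destruct (Z.eq_dec (Z.of_nat x) ((2*k+1) * a k - 2)); [right; left; exists 1; lia|].
        right; right; lia.
    + intros [E | [(e & He & Hne & E) | [_ E]]]; [left; left; lia | | right; right; lia].
      destruct (Z_le_gt_dec e 3); [right; right; lia|].
      destruct (Z_le_gt_dec e (3*k-3)); [right; left; exists (3*k-3-e) | left]; lia.
  - transitivity (Z.of_nat x = (2*i+2) * a k \/ nontop (i+1) 1 (Z.of_nat x));
      [unfold Bgen; apply block_iff; lia | tauto].
Qed.

(** [window i s] is [G] restricted to [](2i+s)a, (2i+s+1)a]] when [k <= i <= 2k-1]
    and [(i, s) <> (k, 0)]. *)
Definition window (i s : Z) : nset := fun x =>
  exists r, Z.of_nat x = (2*i+s) * a k + r /\
    ((exists t, 0 <= t /\ r = 1 + 2*t /\ r <= 12*k - 6*i - 7) \/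
     (12*k - 6*i - 5 <= r <= a k /\ r <> 12*k - 6*i - 2)).

Lemma window_iff i s u1 v1 u2 v2 u3 v3 x : k <= i ->
  u1 = (2*i+s) * a k + 1 -> v1 = u1 + 2*(6*k - 3*i - 4) -> u2 = u1 + 2*(6*k - 3*i - 3) ->
  v2 = u2 + 2 -> u3 = u2 + 4 -> v3 = (2*i+s+1) * a k ->
  (setU (Icc2 u1 v1) (setU (Icc u2 v2) (Icc u3 v3)) x <-> window i s x).
Proof.
  intros Hi -> -> -> -> -> ->. unfold setU, Icc, window. rewrite Icc2_iff. split.
  - intros [(t & Ht & E & Hle) | I]; exists (Z.of_nat x - (2*i+s) * a k);
      (split; [lia|]); [left; exists t | right]; lia.
  - intros (r & E & [(t & Ht & Er & Hle) | Hr]); [left; exists t | right]; lia.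
Qed.

Lemma C_iff i x : k <= i -> C k i x <-> window i 0 x.
Proof. intro. unfold C. apply window_iff; lia. Qed.

Lemma D_iff i x : k <= i -> D k i x <-> window i 1 x.
Proof. intro. unfold D. apply window_iff; lia. Qed.

Lemma Dkk_iff x : Dkk k x <-> window k 1 x.
Proof. unfold Dkk. apply window_iff; lia. Qed.

Lemma window_Gz i s x : k <= i <= 2*k-1 -> 0 <= s <= 1 -> (i = k -> s = 1) ->
  window i s x -> Gz (Z.of_nat x).
Proof.
  intros Hi Hs Hik (r & E & [(t & Ht & Er & Hle) | Hr]).
  - apply (Gz_window_odd i s t); lia.
  - apply (Gz_window_high i s); lia.
Qed.

Lemma H5_Gz x : H5 k x -> Gz (Z.of_nat x).
Proof.
  intros [E | [(i & Hi & [HA | HB]) | [HD | [(i & Hi & [HC | HD]) | HT]]]].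
  - exists 0, 0, 0. lia.
  - apply A_iff in HA; [|lia].
    destruct HA as [E | (e & He & Hne & E)]; [exists i, 1, 0 | exists (i+1), 0, e]; lia.
  - apply B_iff in HB; [|lia].
    destruct HB as [E | [(e & He & Hne & E) | (-> & [E | [E | E]])]];
      [exists (i+1), 0, 0 | exists (i+1), 1, e | exists k, 1, 0
      | exists (k+1), 0, (3*k+1) | exists (k+1), 0, (3*k+3)]; lia.
  - apply Dkk_iff in HD. apply (window_Gz k 1); lia || assumption.
  - apply C_iff in HC; [|lia]. apply (window_Gz i 0); lia || assumption.
  - apply D_iff in HD; [|lia]. apply (window_Gz i 1); lia || assumption.
  - apply Gz_tail. exact HT.
Qed.

Lemma window_H5 i s x : k <= i <= 2*k-1 -> 0 <= s <= 1 -> (i = k -> s = 1) ->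
  window i s x -> H5 k x.
Proof.
  intros Hi Hs Hik Hx. right; right.
  destruct (Z.eq_dec i k) as [-> | Hne].
  - left. apply Dkk_iff. rewrite <- (Hik eq_refl). exact Hx.
  - right; left. exists i. split; [lia|].
    assert (s = 0 \/ s = 1) as [-> | ->] by lia; [left; apply C_iff | right; apply D_iff]; lia || exact Hx.
Qed.

Lemma Gz_low_H5 Q s e x : 0 <= Q <= k -> 0 <= s <= 1 -> 0 <= e <= 3*Q -> e <> 3*Q - 1 ->
  Z.of_nat x = (2*Q+s) * a k - 2*e -> H5 k x.
Proof.
  intros HQ Hs He Hne E.
  destruct (Z.eq_dec e 0) as [-> | He0]; [assert (s = 0 \/ s = 1) as [-> | ->] by lia |].
  - destruct (Z.eq_dec Q 0) as [-> | HQ0]; [left; lia|].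
    right; left. exists (Q-1). split; [lia|]. right. apply B_iff; [lia|]. left; lia.
  - right; left. destruct (Z.eq_dec Q k) as [-> | HQk].
    + exists (k-1). split; [lia|]. right. apply B_iff; [lia|]. right; right; lia.
    + exists Q. split; [lia|]. left. apply A_iff; [lia|]. left; lia.
  - right; left. exists (Q-1). split; [lia|].
    assert (s = 0 \/ s = 1) as [-> | ->] by lia;
      [left; apply A_iff | right; apply B_iff]; try lia; right; [|left]; exists e; lia.
Qed.

Lemma Gz_high_H5 Q s e x : k+1 <= Q -> 0 <= s <= 1 -> 0 <= e <= 3*Q -> e <> 3*Q - 1 ->
  Z.of_nat x = (2*Q+s) * a k - 2*e -> H5 k x.
Proof.
  intros HQ Hs He Hne E.
  assert (Htail : (4*k-1) * a k + 5 <= Z.of_nat x -> H5 k x) by (intro; do 4 right; exact H).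
  destruct (Z_le_gt_dec Q (2*k)) as [HQ2 | HQ2];
    [| apply Htail; assert (0 <= (Q-2*k-1) * (2 * a k - 6)) by (apply Z.mul_nonneg_nonneg; lia); lia].
  destruct (Z_le_gt_dec e (3*k)).
  - destruct (Z.eq_dec Q (2*k)) as [EQ | HQ2k]; [destruct (Z.eq_dec s 1) as [-> | Hs1]|];
      [subst Q; apply Htail; lia | ..].
    all: apply (window_H5 (Q-1+s) (1-s)); try lia.
    all: exists (a k - 2*e); split; [lia|].
    all: destruct (Z_le_gt_dec (a k - 2*e) (12*k - 6*(Q-1+s) - 7)); [left; exists (3*k-e) | right]; lia.
  - destruct (Z.eq_dec Q (k+1)) as [EQ | HQk]; [destruct (Z.eq_dec s 0) as [-> | Hs0]|];
      [subst Q; right; left; exists (k-1); split; [lia|]; right; apply B_iff; [lia|]; right; right; lia | ..].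
    all: apply (window_H5 (Q-1) s); try lia.
    all: exists (2 * a k - 2*e); split; [lia | right; lia].
Qed.

Lemma Gz_H5 x : Gz (Z.of_nat x) -> H5 k x.
Proof.
  intros (Q & s & e & HQ & Hs & He & Hne & E).
  destruct (Z_le_gt_dec Q k); [apply (Gz_low_H5 Q s e) | apply (Gz_high_H5 Q s e)]; lia.
Qed.

Lemma H5_iff_Gz x : H5 k x <-> Gz (Z.of_nat x).
Proof. split; [apply H5_Gz | apply Gz_H5]. Qed.

Lemma H5_sub_G : set_sub (H5 k) (G k).
Proof. intros x Hx. apply G_Gz, H5_iff_Gz, Hx. Qed.

Lemma G_sub_H5 : set_sub (G k) (H5 k).
Proof. intros x Hx. apply H5_iff_Gz, G_Gz, Hx. Qed.

Lemma C_last : set_eq (C k (2*k-1))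
  (setU (Icc ((4*k-2) * a k + 1) ((4*k-2) * a k + 3)) (Icc ((4*k-2) * a k + 5) ((4*k-1) * a k))).
Proof.
  intro x. rewrite C_iff by lia. unfold window, setU, Icc. split.
  - intros (r & E & [(t & Ht & Er & Hle) | Hr]); lia.
  - intro I. exists (Z.of_nat x - (2*(2*k-1)+0) * a k). split; [lia | right; lia].
Qed.

Lemma D_last : set_eq (D k (2*k-1))
  (setU (Icc ((4*k-1) * a k + 1) ((4*k-1) * a k + 3)) (Icc ((4*k-1) * a k + 5) (4*k * a k))).
Proof.
  intro x. rewrite D_iff by lia. unfold window, setU, Icc. split.
  - intros (r & E & [(t & Ht & Er & Hle) | Hr]); lia.
  - intro I. exists (Z.of_nat x - (2*(2*k-1)+1) * a k). split; [lia | right; lia].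
Qed.

Lemma A_range i x : 0 <= i <= k-1 -> A k i x ->
  (2*i+1) * a k <= Z.of_nat x <= (2*i+2) * a k - 2.
Proof. intros Hi Hx. apply A_iff in Hx as [E | (e & He & Hne & E)]; lia. Qed.

Lemma B_range i x : 0 <= i <= k-1 -> B k i x ->
  (2*i+2) * a k <= Z.of_nat x <= (2*i+3) * a k /\ (i < k-1 -> Z.of_nat x <= (2*i+3) * a k - 2).
Proof. intros Hi Hx. apply B_iff in Hx as [E | [(e & He & Hne & E) | (-> & E)]]; lia. Qed.

Lemma window_range i s x : k <= i <= 2*k-1 -> window i s x ->
  (2*i+s) * a k < Z.of_nat x <= (2*i+s+1) * a k.
Proof. intros Hi (r & E & [(t & Ht & Er & Hle) | Hr]); lia. Qed.

Lemma A_top i : 0 <= i <= k-1 -> A k i (Z.to_nat ((2*i+1) * a k)).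
Proof. intro Hi. apply A_iff; [lia|]. left. apply Z2Nat.id. nia. Qed.

Lemma B_top i : 0 <= i <= k-1 -> B k i (Z.to_nat ((2*i+2) * a k)).
Proof. intro Hi. apply B_iff; [lia|]. left. apply Z2Nat.id. nia. Qed.

Lemma window_top i s : k <= i <= 2*k-1 -> 0 <= s <= 1 -> window i s (Z.to_nat ((2*i+s+1) * a k)).
Proof.
  intros Hi Hs. exists (a k). rewrite Z2Nat.id by nia. split; [lia | right; lia].
Qed.

Lemma blocks_increasing :
  (forall i, 0 <= i <= k - 1 -> set_lt (A k i) (B k i)) /\
  (forall i, 0 <= i <= k - 2 -> set_lt (B k i) (A k (i+1))) /\
  set_lt (B k (k-1)) (Dkk k) /\
  (forall i, k + 1 <= i <= 2*k - 1 -> set_lt (C k i) (D k i)) /\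
  (forall i, k + 1 <= i <= 2*k - 2 -> set_lt (D k i) (C k (i+1))).
Proof.
  split; [|split; [|split; [|split]]]; [intros i Hi.. | | intros i Hi | intros i Hi].
  - apply (set_lt_sep _ _ ((2*i+2) * a k - 2) _ _ (A_top i Hi) (B_top i Hi));
      intros x Hx; [apply A_range in Hx | apply B_range in Hx]; lia.
  - apply (set_lt_sep _ _ ((2*i+3) * a k - 2) _ _ (B_top i ltac:(lia)) (A_top (i+1) ltac:(lia)));
      intros x Hx; [apply B_range in Hx | apply A_range in Hx]; lia.
  - apply (set_lt_sep _ _ ((2*k+1) * a k) _ _ (B_top (k-1) ltac:(lia))
             (proj2 (Dkk_iff _) (window_top k 1 ltac:(lia) ltac:(lia))));
      intros x Hx; [apply B_range in Hx | apply Dkk_iff, window_range in Hx]; lia.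
  - apply (set_lt_sep _ _ ((2*i+1) * a k) _ _ (proj2 (C_iff i _ ltac:(lia)) (window_top i 0 ltac:(lia) ltac:(lia)))
             (proj2 (D_iff i _ ltac:(lia)) (window_top i 1 ltac:(lia) ltac:(lia))));
      intros x Hx; [apply C_iff, window_range in Hx | apply D_iff, window_range in Hx]; lia.
  - apply (set_lt_sep _ _ ((2*i+2) * a k) _ _ (proj2 (D_iff i _ ltac:(lia)) (window_top i 1 ltac:(lia) ltac:(lia)))
             (proj2 (C_iff (i+1) _ ltac:(lia)) (window_top (i+1) 0 ltac:(lia) ltac:(lia))));
      intros x Hx; [apply D_iff, window_range in Hx | apply C_iff, window_range in Hx]; lia.
Qed.

Local Ltac not_Gz j :=
  let H := fresh in intro H; apply (Gz_window j) in H;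
  [destruct H as (?Q & ?s & ?e & ? & ? & ? & [[? ?] | [? ?]]); lia | lia | lia].

Lemma triple_top i s X : 1 <= i <= k -> 0 <= s <= 1 -> X = (2*i+s-1) * a k ->
  triple Gz X ((2*i+s) * a k - 6*i) ((2*i+s) * a k - 6*i + 4) ((2*i+s) * a k - 6*i + 6).
Proof.
  intros Hi Hs EX.
  repeat split; try lia; try (Z.to_euclidean_division_equations; lia);
    try (intros z Hz; not_Gz (2*i+s-1));
    [exists i, s, (3*i) | exists i, s, (3*i-2) | exists i, s, (3*i-3)]; lia.
Qed.

Lemma triple_even i s t X : 2 <= i <= k -> 0 <= s <= 1 -> 0 <= t <= i-2 ->
  (s = 0 \/ i <= k-1 \/ t <= i-3) -> X = (2*i+s) * a k - 6*i + 6 + 6*t ->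
  triple Gz X (X+2) (X+4) (X+6).
Proof.
  intros. apply triple_of_evens;
    [exists i, s, (3*i-4-3*t) | exists i, s, (3*i-5-3*t) | exists i, s, (3*i-6-3*t)
    | not_Gz (2*i+s-1) | not_Gz (2*i+s-1) | not_Gz (2*i+s-1)]; lia.
Qed.

Lemma triple_odd i s t X : k <= i <= 2*k-1 -> 0 <= s <= 1 -> (i = k -> s = 1) -> 0 <= t ->
  6*t <= 12*k - 6*i - 12 -> X = (2*i+s) * a k + 1 + 6*t ->
  triple Gz X (X+2) (X+4) (X+6).
Proof.
  intros. apply triple_of_evens;
    [apply (Gz_window_odd i s (1+3*t)) | apply (Gz_window_odd i s (2+3*t)) |
    | not_Gz (2*i+s) | not_Gz (2*i+s) | not_Gz (2*i+s)]; try lia.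
  destruct (Z_le_gt_dec (7+6*t) (12*k - 6*i - 7));
    [apply (Gz_window_odd i s (3+3*t)) | apply (Gz_window_high i s)]; lia.
Qed.

Lemma triple_run3 i s X : k <= i <= 2*k-1 -> 0 <= s <= 1 ->
  X = (2*i+s) * a k + 12*k - 6*i - 5 -> triple Gz X (X+1) (X+2) (X+4).
Proof.
  intros. apply triple_of_run_skip; [| | not_Gz (2*i+s) |]; apply (Gz_window_high i s); lia.
Qed.

Lemma triple_run i s t X : k <= i <= 2*k-1 -> 0 <= s <= 1 -> 0 <= t ->
  12*k - 6*i + 1 + 3*t <= a k -> X = (2*i+s) * a k + 12*k - 6*i - 1 + 3*t ->
  triple Gz X (X+1) (X+2) (X+3).
Proof.
  intros. apply triple_of_run; try (apply (Gz_window_high i s); lia).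
  destruct (Z_le_gt_dec (12*k - 6*i + 2 + 3*t) (a k));
    [apply (Gz_window_high i s) | exists (i+1), s, (3*k)]; lia.
Qed.

Lemma triple_tail t X : 0 <= t -> X = (4*k-1) * a k + 5 + 3*t -> triple Gz X (X+1) (X+2) (X+3).
Proof. intros. apply triple_of_run; apply Gz_tail; lia. Qed.

(** [start X] singles out the elements [g_{3m+1}] of the increasing enumeration
    [g] of [G]. A level [L = 2i+s <= 2k+1] is entered from the top [(L-1)a] of
    the previous one and then walked by steps of [6]; from [(2k+1)a - 6] on, where
    level [2k+2] interleaves, each window [](2i+s)a, (2i+s+1)a]] is walked by
    steps of [6] through its odd part and then by runs of three. *)
Inductive start : Z -> Prop :=
  | start_top i s X : 1 <= i <= k -> 0 <= s <= 1 -> X = (2*i+s-1) * a k -> start X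
  | start_even i s t X : 2 <= i <= k -> 0 <= s <= 1 -> 0 <= t <= i-2 ->
      (s = 0 \/ i <= k-1 \/ t <= i-3) -> X = (2*i+s) * a k - 6*i + 6 + 6*t -> start X
  | start_odd i s t X : k <= i <= 2*k-1 -> 0 <= s <= 1 -> (i = k -> s = 1) -> 0 <= t ->
      6*t <= 12*k - 6*i - 12 -> X = (2*i+s) * a k + 1 + 6*t -> start X
  | start_run3 i s X : k <= i <= 2*k-1 -> 0 <= s <= 1 ->
      X = (2*i+s) * a k + 12*k - 6*i - 5 -> start X
  | start_run i s t X : k <= i <= 2*k-1 -> 0 <= s <= 1 -> (i = 2*k-1 -> s = 0) -> 0 <= t ->
      12*k - 6*i + 1 + 3*t <= a k -> X = (2*i+s) * a k + 12*k - 6*i - 1 + 3*t -> start X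
  | start_tail t X : 0 <= t -> X = (4*k-1) * a k + 5 + 3*t -> start X.

Lemma start_evens i s t X : 1 <= i <= k -> 0 <= s <= 1 -> 0 <= t <= i-1 ->
  (s = 0 \/ i <= k-1 \/ t <= i-2) -> X = (2*i+s) * a k - 6*i + 6 + 6*t -> start X.
Proof.
  intros Hi Hs Ht Hc EX.
  destruct (Z.eq_dec t (i-1)) as [-> | Ht'].
  - assert (s = 0 \/ s = 1) as [-> | ->] by lia;
      [apply (start_top i 1) | apply (start_top (i+1) 0)]; lia.
  - destruct (Z.eq_dec s 1) as [-> | Hs1]; [destruct (Z.eq_dec i k) as [-> | Hik]|].
    + destruct (Z.eq_dec t (k-2)) as [-> | Htk];
        [apply (start_run3 k 0) | apply (start_even k 1 t)]; lia.
    + apply (start_even i 1 t); lia.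
    + apply (start_even i s t); lia.
Qed.

Lemma start_window i s X : k <= i <= 2*k-1 -> 0 <= s <= 1 -> (i = k -> s = 1) ->
  X = (2*i+s) * a k + 1 -> start X.
Proof.
  intros. destruct (Z_le_gt_dec 0 (12*k - 6*i - 12));
    [apply (start_odd i s 0) | apply (start_run3 i s)]; lia.
Qed.

Lemma start_step X : start X -> exists U V W, triple Gz X U V W /\ start W.
Proof.
  destruct 1 as [i s X Hi Hs EX | i s t X Hi Hs Ht Hc EX | i s t X Hi Hs Hik Ht Ht' EX
    | i s X Hi Hs EX | i s t X Hi Hs His Ht Hr EX | t X Ht EX].
  - eexists _, _, _. split; [apply (triple_top i s); lia | apply (start_evens i s 0); lia].
  - exists (X+2), (X+4), (X+6). split; [apply (triple_even i s t); lia|].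
    apply (start_evens i s (t+1)); lia.
  - exists (X+2), (X+4), (X+6). split; [apply (triple_odd i s t); lia|].
    destruct (Z_le_gt_dec (6*(t+1)) (12*k - 6*i - 12));
      [apply (start_odd i s (t+1)) | apply (start_run3 i s)]; lia.
  - exists (X+1), (X+2), (X+4). split; [apply (triple_run3 i s); lia|].
    destruct (Z.eq_dec i (2*k-1)) as [-> | Hi']; [destruct (Z.eq_dec s 1) as [-> | Hs1]|];
      [apply (start_tail 0) | apply (start_run (2*k-1) s 0) | apply (start_run i s 0)]; lia.
  - exists (X+1), (X+2), (X+3). split; [apply (triple_run i s t); lia|].
    destruct (Z_le_gt_dec (12*k - 6*i + 1 + 3*(t+1)) (a k));
      [apply (start_run i s (t+1)) | apply (start_window (i+s) (1-s))]; lia.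
  - exists (X+1), (X+2), (X+3). split; [apply (triple_tail t); lia | apply (start_tail (t+1)); lia].
Qed.

Lemma Gz_unbounded : forall x, exists y, (x < y)%nat /\ Gz (Z.of_nat y).
Proof.
  intro x. assert (0 <= (4*k-1) * a k) by nia.
  exists (x + Z.to_nat ((4*k-1) * a k + 5))%nat. split; [lia | apply Gz_tail; lia].
Qed.

Lemma enum_first_three : let g := enum _ Gz_unbounded in
  Z.of_nat (g 1%nat) = a k /\ Z.of_nat (g 2%nat) = b k /\ Z.of_nat (g 3%nat) = c k.
Proof.
  intro g.
  assert (Hfirst : Zsucc Gz 0 (a k)).
  { split; [lia | split; [exists 0, 1, 0; lia | intros z Hz; not_Gz 0]]. }
  destruct (triple_top 1 0 (a k) ltac:(lia) ltac:(lia) ltac:(lia)) as (HU & HV & HW & _).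
  assert (E1 := enum_S _ Gz_unbounded 0 _ (Zsucc_succ_in Gz 0 (a k) ltac:(lia) Hfirst)).
  apply Zsucc_succ_in in HU; [| lia]. rewrite <- E1 in HU.
  assert (E2 := enum_S _ _ _ _ HU).
  apply Zsucc_succ_in in HV; [| lia]. rewrite <- E2 in HV.
  assert (E3 := enum_S _ _ _ _ HV).
  unfold g, b, c. rewrite E1, E2, E3, !Z2Nat.id; lia.
Qed.

Lemma H5_numerical_semigroup : numerical_semigroup (H5 k).
Proof.
  split; [split|].
  - left. reflexivity.
  - intros x y Hx Hy. apply G_sub_H5, gen_add; apply H5_sub_G; assumption.
  - exists (seq 0 (Z.to_nat ((4*k-1) * a k + 5))). intros x Hx. apply in_seq.
    assert (0 <= (4*k-1) * a k) by nia.
    destruct (Z_lt_le_dec (Z.of_nat x) ((4*k-1) * a k + 5)); [lia|].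
    exfalso. apply Hx. do 4 right. assumption.
Qed.

Lemma H5_perm_num_semigroup : perm_num_semigroup 3 (H5 k).
Proof.
  split; [exact H5_numerical_semigroup|].
  destruct enum_first_three as (g1 & g2 & g3).
  set (g := enum _ Gz_unbounded) in *.
  exists g. split; [exact (enum_lt _ _) | split; [|split]].
  - intro x. rewrite H5_iff_Gz. split; [apply (enum_onto (fun y => Gz (Z.of_nat y)) Gz_unbounded)|].
    intros [j <-]. apply (enum_in (fun y => Gz (Z.of_nat y))). exists 0, 0, 0. lia.
  - intro x. rewrite H5_iff_Gz, <- G_Gz. unfold G, S3, set3.
    split; apply gen_sub; intros y Hy.
    + destruct Hy as [E | [E | E]]; [exists 1%nat | exists 2%nat | exists 3%nat]; lia.
    + destruct Hy as (i & Hi & <-). assert (i = 1 \/ i = 2 \/ i = 3)%nat as [-> | [-> | ->]] by lia; lia.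
  - intros m r Hr. apply (distinct_mod3_unique (fun i => g (m*3+i)%nat)); [|exact Hr].
    apply (enum_distinct_mod3 Gz start Gz_unbounded).
    + fold g. rewrite g1. apply (start_top 1 0); lia.
    + intros X _. apply start_step.
Qed.

End Semigroup.

Theorem lemma4p5 (k : Z) (hk : 2 <= k) :
  (* (1) *)
  (set_eq (C k (2*k-1))
     (setU (Icc ((4*k-2)*a k + 1) ((4*k-2)*a k + 3))
           (Icc ((4*k-2)*a k + 5) ((4*k-1)*a k))) /\
   set_eq (D k (2*k-1))
     (setU (Icc ((4*k-1)*a k + 1) ((4*k-1)*a k + 3))
           (Icc ((4*k-1)*a k + 5) (4*k*a k)))) /\
  (* (2) *)
  (forall x : nat, G k x <->
     exists p q r : nat, (r <= q)%nat /\
       Z.of_nat x = (Z.of_nat p + 2 * Z.of_nat q) * a k + 4 * Z.of_nat r - 6 * Z.of_nat q) /\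
  (* (3) *)
  set_sub (H5 k) (G k) /\
  (* (4) *)
  set_sub (G k) (H5 k) /\
  (* (5) *)
  ((forall i, 0 <= i <= k - 1 -> set_lt (A k i) (B k i)) /\
   (forall i, 0 <= i <= k - 2 -> set_lt (B k i) (A k (i+1))) /\
   set_lt (B k (k-1)) (Dkk k) /\
   (forall i, k + 1 <= i <= 2*k - 1 -> set_lt (C k i) (D k i)) /\
   (forall i, k + 1 <= i <= 2*k - 2 -> set_lt (D k i) (C k (i+1)))) /\
  (* (6) *)
  perm_num_semigroup 3 (H5 k).
Proof.
  split; [exact (conj (C_last k hk) (D_last k hk))|].
  split; [exact (G_pqr k hk)|].
  split; [exact (H5_sub_G k hk)|].
  split; [exact (G_sub_H5 k hk)|].
  split; [exact (blocks_increasing k hk) | exact (H5_perm_num_semigroup k hk)].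
Qed.
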